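(* Let $(A_i,\omega_i)$, $i=1,2$, be baric algebras over $K$ and let $I$ be a two-sided ideal of $A_1\bowtie A_2$ such that $I_1\neq A_1$. Then $I_1$ is a two-sided ideal of $A_1$ if and only if $I_2\subseteq\operatorname{Ker}\omega_2$.
   Context: A baric algebra over a field $K$ is a pair $(A,\omega)$ where $A$ is a (not necessarily associative) $K$-algebra and $\omega:A\to K$ is a nonzero $K$-algebra homomorphism. For baric algebras $(A_1,\omega_1),(A_2,\omega_2)$, $A_1\bowtie A_2$ denotes the vector space $A_1\oplus A_2$ with product $(a_1,a_2)(b_1,b_2)=(a_1b_1+\omega_2(b_2)a_1,\ a_2b_2+\omega_1(b_1)a_2)$. For a subset $I\subseteq A_1\bowtie A_2$, $I_1=\{a_1\in A_1:\exists a_2\in A_2,\ (a_1,a_2)\in I\}$ and $I_2=\{a_2\in A_2:\exists a_1\in A_1,\ (a_1,a_2)\in I\}$ are its coordinate projections. *)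

From HB Require Import structures.
From mathcomp Require Import all_boot all_order all_algebra.
Set Implicit Arguments. Unset Strict Implicit. Unset Printing Implicit Defensive.
Import GRing.Theory.
Local Open Scope ring_scope.

Section Baric.
Variable K : fieldType.

Definition bilinear_mul (V : lmodType K) (m : V -> V -> V) : Prop :=
  (forall (a : K) (x y z : V), m (a *: x + y) z = a *: m x z + m y z) /\
  (forall (a : K) (x y z : V), m z (a *: x + y) = a *: m z x + m z y).

Definition baric_weight (V : lmodType K) (m : V -> V -> V) (w : V -> K) : Prop :=
  [/\ forall (a : K) (x y : V), w (a *: x + y) = a * w x + w y,
      forall x y : V, w (m x y) = w x * w y &
      exists x : V, w x != 0].

Definition is_ideal (V : lmodType K) (m : V -> V -> V) (I : V -> Prop) : Prop :=
  [/\ I 0,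
      forall (a : K) (x y : V), I x -> I y -> I (a *: x + y),
      forall x y : V, I x -> I (m y x) &
      forall x y : V, I x -> I (m x y)].

Definition bowtie_mul (A1 A2 : lmodType K) (m1 : A1 -> A1 -> A1) (m2 : A2 -> A2 -> A2)
    (w1 : A1 -> K) (w2 : A2 -> K) (x y : A1 * A2) : A1 * A2 :=
  (m1 x.1 y.1 + w2 y.2 *: x.1, m2 x.2 y.2 + w1 y.1 *: x.2).

Definition proj1_set (A1 A2 : Type) (I : A1 * A2 -> Prop) : A1 -> Prop :=
  fun a1 => exists a2, I (a1, a2).
Definition proj2_set (A1 A2 : Type) (I : A1 * A2 -> Prop) : A2 -> Prop :=
  fun a2 => exists a1, I (a1, a2).

End Baric.

From HB Require Import structures.
From mathcomp Require Import all_boot all_order all_algebra.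
Import GRing.Theory.
Set Implicit Arguments. Unset Strict Implicit. Unset Printing Implicit Defensive.
Local Open Scope ring_scope.

(* Write I_1, I_2 for the coordinate projections of the ideal I
   of A1 ⋈ A2.  Multiplying (a1, a2) ∈ I by (y, 0) on the left and on the
   right gives, in the first coordinate,
     (y, 0)(a1, a2) ↦ y a1 + ω2(a2) y      and      (a1, a2)(y, 0) ↦ a1 y,
   since ω2(0) = 0.  Hence:
   - if ω2 vanishes on I_2, then I_1 absorbs products on both sides, and it
     is a subspace because I is, so I_1 is an ideal of A1;
   - if I_1 is an ideal and ω2(a2) ≠ 0 for some a2 ∈ I_2, then both y a1 and
     y a1 + ω2(a2) y lie in I_1, so y ∈ I_1 for every y, i.e. I_1 = A1,
     contradicting the hypothesis. *)

Section Subspaces.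
Variable K : fieldType.

Definition is_subspace (V : lmodType K) (S : V -> Prop) : Prop :=
  S 0 /\ forall (a : K) (x y : V), S x -> S y -> S (a *: x + y).

Lemma ideal_subspace (V : lmodType K) (m : V -> V -> V) (I : V -> Prop) :
  is_ideal m I -> is_subspace I.
Proof. by case. Qed.

Lemma proj1_subspace (A1 A2 : lmodType K) (I : A1 * A2 -> Prop) :
  is_subspace I -> is_subspace (proj1_set I).
Proof.
case=> I0 Ilin; split; first by exists 0.
by move=> a x y [x2 Hx] [y2 Hy]; exists (a *: x2 + y2); apply: Ilin Hx Hy.
Qed.

Lemma subspace_cancel (V : lmodType K) (S : V -> Prop) (u y : V) (c : K) :
  is_subspace S -> c != 0 -> S u -> S (u + c *: y) -> S y.
Proof.
case=> S0 Slin c0 Su Suy.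
have Sy : S (c *: y) by have := Slin (-1) _ _ Su Suy; rewrite scaleN1r addKr.
by have := Slin c^-1 _ _ Sy S0; rewrite addr0 scalerA mulVf // scale1r.
Qed.

(* A weight is additive, hence vanishes at 0. *)
Lemma weight0 (V : lmodType K) (m : V -> V -> V) (w : V -> K) :
  baric_weight m w -> w 0 = 0.
Proof.
case=> wlin _ _; have := wlin 1 0 0; rewrite scale1r addr0 mul1r => w00.
by apply: (@addrI _ (w 0)); rewrite addr0 -w00.
Qed.

End Subspaces.

Section Bowtie.
Variables (K : fieldType) (A1 A2 : lmodType K).
Variables (m1 : A1 -> A1 -> A1) (m2 : A2 -> A2 -> A2).
Variables (w1 : A1 -> K) (w2 : A2 -> K).
Hypothesis hw2 : baric_weight m2 w2.
Variable I : A1 * A2 -> Prop.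
Hypothesis hI : is_ideal (bowtie_mul m1 m2 w1 w2) I.

Local Notation I1 := (proj1_set I).

(* Left multiplication by (y, 0): y a1 + ω2(a2) y lies in I_1. *)
Lemma proj1_left_absorb (a1 : A1) (a2 : A2) (y : A1) :
  I (a1, a2) -> I1 (m1 y a1 + w2 a2 *: y).
Proof.
by case: hI => _ _ Il _ Ia; exists (m2 0 a2 + w1 a1 *: 0); apply: (Il _ (y, 0) Ia).
Qed.

(* Right multiplication by (y, 0): since ω2(0) = 0, a1 y lies in I_1. *)
Lemma proj1_right_absorb (a1 : A1) (y : A1) :
  I1 a1 -> I1 (m1 a1 y).
Proof.
case: hI => _ _ _ Ir [a2 Ia]; exists (m2 a2 0 + w1 y *: a2).
by have := Ir _ (y, 0) Ia; rewrite /bowtie_mul /= (weight0 hw2) scale0r addr0.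
Qed.

Lemma proj1_ideal_of_weight0 :
  (forall a2, proj2_set I a2 -> w2 a2 = 0) -> is_ideal m1 I1.
Proof.
move=> Iw; have [I10 I1lin] := proj1_subspace (ideal_subspace hI).
split=> // [x y [x2 Ix] | x y]; last exact: proj1_right_absorb.
have := proj1_left_absorb y Ix.
by rewrite (Iw x2) ?scale0r ?addr0 //; exists x.
Qed.

Lemma proj1_full_of_weight_neq0 (a1 : A1) (a2 : A2) :
  is_ideal m1 I1 -> I (a1, a2) -> w2 a2 != 0 -> forall y, I1 y.
Proof.
move=> I1ideal Ia wa2 y; have [_ _ I1l _] := I1ideal.
apply: (subspace_cancel (ideal_subspace I1ideal) wa2 _ (proj1_left_absorb y Ia)).
by apply: I1l; exists a2.
Qed.

End Bowtie.

Theorem proposition5p2 (K : fieldType) (A1 A2 : lmodType K)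
  (m1 : A1 -> A1 -> A1) (m2 : A2 -> A2 -> A2)
  (hm1 : bilinear_mul m1) (hm2 : bilinear_mul m2)
  (w1 : A1 -> K) (w2 : A2 -> K)
  (hw1 : baric_weight m1 w1) (hw2 : baric_weight m2 w2)
  (I : A1 * A2 -> Prop)
  (hI : is_ideal (bowtie_mul m1 m2 w1 w2) I)
  (hI1 : ~ (forall a1 : A1, proj1_set I a1)) :
  is_ideal m1 (proj1_set I) <-> (forall a2 : A2, proj2_set I a2 -> w2 a2 = 0).
Proof.
split; last exact: (proj1_ideal_of_weight0 hw2 hI).
move=> I1ideal a2 [a1 Ia]; have [//|wa2] := eqVneq (w2 a2) 0.
by case: hI1; exact: (proj1_full_of_weight_neq0 hI I1ideal Ia wa2).
Qed.
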